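(* Let $n\ge 2$ and let $\Psi^{(1)},\dots,\Psi^{(t)}$ be $t$ mutually orthogonal quantum Latin squares of order $n$. Then $t\le n-1$. Moreover, if $t=n-1$, then this set of MOQLS is classical.
   Context: A quantum Latin square (QLS) of order $n$ is an $n\times n$ matrix $\Psi=(\psi_{ij})_{1\le i,j\le n}$ whose entries are unit vectors in $\mathbb C^n$ such that the entries of each row and the entries of each column form an orthonormal basis of $\mathbb C^n$. Two QLS $\Psi=(\psi_{ij})$ and $\Phi=(\phi_{ij})$ of order $n$ are orthogonal if $\{\psi_{ij}\otimes\phi_{ij}: 1\le i,j\le n\}$ is an orthonormal basis of $\mathbb C^n\otimes\mathbb C^n$. A set of $t$ mutually orthogonal quantum Latin squares of order $n$ ($t$ MOQLS$(n)$) is a set of $t$ QLS of order $n$ that are pairwise orthogonal. Fix the standard orthonormal basis $\ket{1},\dots,\ket{n}$ of $\mathbb C^n$. Two sets of $t$ MOQLS$(n)$ are isotopic if one can be obtained from the other by a sequence of the operations: (i) multiplying individual entries by phase factors (complex numbers of modulus $1$); (ii) permuting the rows, and permuting the columns, simultaneously in all $t$ squares; (iii) for each square separately, applying one unitary transformation of $\mathbb C^n$ to all entries of that square. A set of $t$ MOQLS$(n)$ is classical if it is isotopic to a set of $t$ MOQLS$(n)$ all of whose entries lie in $\{\ket{1},\dots,\ket{n}\}$. *)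

From HB Require Import structures.
From mathcomp Require Import all_boot all_order all_algebra all_fingroup.
From mathcomp Require Import reals.
From mathcomp Require Import complex mxtens.
Set Implicit Arguments. Unset Strict Implicit. Unset Printing Implicit Defensive.
Import Order.TTheory GRing.Theory Num.Theory.
Local Open Scope ring_scope.
Local Open Scope complex_scope.

Section QLS.
Variable R : realType.
Local Notation C := (R[i]).

Definition dotv m (u v : 'cV[C]_m) : C := \sum_(k < m) (u k 0)^* * v k 0.

Definition is_onb (I : finType) m (f : I -> 'cV[C]_m) : Prop :=
  (forall a b, dotv (f a) (f b) = (a == b)%:R) /\
  (forall w : 'cV[C]_m, exists c : I -> C, w = \sum_(a : I) c a *: f a).

Definition QLS n (Psi : 'I_n -> 'I_n -> 'cV[C]_n) : Prop :=
  (forall i, is_onb (fun j => Psi i j)) /\ (forall j, is_onb (fun i => Psi i j)).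

(* orthogonality of two QLS: {psi_ij (x) phi_ij} is an ONB of C^n (x) C^n,
   tensor product = Kronecker product ( *t ) of column vectors *)
Definition orthQLS n (Psi Phi : 'I_n -> 'I_n -> 'cV[C]_n) : Prop :=
  is_onb (fun ij : 'I_n * 'I_n => Psi ij.1 ij.2 *t Phi ij.1 ij.2).

Definition MOQLS n t (Psi : 'I_t -> 'I_n -> 'I_n -> 'cV[C]_n) : Prop :=
  (forall k, QLS (Psi k)) /\ (forall k l, k != l -> orthQLS (Psi k) (Psi l)).

Definition unitary n (U : 'M[C]_n) : Prop := U *m (map_mx conjc U)^T = 1%:M.

Inductive isotopy_step n t : ('I_t -> 'I_n -> 'I_n -> 'cV[C]_n) ->
    ('I_t -> 'I_n -> 'I_n -> 'cV[C]_n) -> Prop :=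
  | iso_phase Psi (c : 'I_t -> 'I_n -> 'I_n -> C) :
      (forall k i j, `|c k i j| = 1) ->
      isotopy_step Psi (fun k i j => c k i j *: Psi k i j)
  | iso_perm Psi (s r : {perm 'I_n}) :
      isotopy_step Psi (fun k i j => Psi k (s i) (r j))
  | iso_unitary Psi (U : 'I_t -> 'M[C]_n) :
      (forall k, unitary (U k)) ->
      isotopy_step Psi (fun k i j => U k *m Psi k i j).

Inductive isotopic n t (Psi : 'I_t -> 'I_n -> 'I_n -> 'cV[C]_n) :
    ('I_t -> 'I_n -> 'I_n -> 'cV[C]_n) -> Prop :=
  | isotopic_refl : isotopic Psi Psi
  | isotopic_step Phi Chi : isotopic Psi Phi -> isotopy_step Phi Chi ->
      isotopic Psi Chi.

Definition ket n (l : 'I_n) : 'cV[C]_n := delta_mx l 0.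

Definition classical_MOQLS n t (Psi : 'I_t -> 'I_n -> 'I_n -> 'cV[C]_n) : Prop :=
  exists Phi, MOQLS Phi /\ isotopic Psi Phi /\
    (forall k i j, exists l : 'I_n, Phi k i j = ket l).

End QLS.

From HB Require Import structures.
From mathcomp Require Import all_boot all_order all_algebra all_fingroup.
From mathcomp Require Import reals.
From mathcomp Require Import complex mxtens.
Set Implicit Arguments. Unset Strict Implicit. Unset Printing Implicit Defensive.
Import Order.TTheory GRing.Theory Num.Theory.
Local Open Scope ring_scope.

(** Fix a cell (i0, j0) and, for each square k, weigh every cell (i, j) by
    [|<Psi_k(i,j), Psi_k(i0,j0)>|^2].  By Parseval each row of these weights sums
    to 1, and the weights vanish on the rest of row i0 and column j0, so the
    (n-1) x (n-1) block away from row i0 and column j0 carries total weight n-1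
    in every square.  Orthogonality of two squares makes their weights at a cell
    other than (i0, j0) have disjoint support, so at each such cell the weights of
    all t squares add up to at most 1.  Hence t (n-1) <= (n-1)^2.

    If t = n-1 every such cell has total weight exactly 1, so all weights are 0 or
    1: each entry of square k is, up to a phase, a vector of the orthonormal basis
    formed by a fixed row of square k.  The unitary sending that basis to the
    standard one, followed by a correction of phases, makes the set classical. *)

Section DisjointSupport.
Variables (R : numDomainType) (I : finType) (F : I -> R).
Hypothesis F_disjoint : forall k l, k != l -> F k * F l = 0.

Lemma sum_disjoint_support k : F k != 0 -> \sum_l F l = F k.
Proof.
move=> Fk_neq0; rewrite (bigD1 k) //= big1 ?addr0 // => l lk.
have /eqP : F k * F l = 0 by apply: F_disjoint; rewrite eq_sym.
by rewrite mulf_eq0 (negbTE Fk_neq0) => /eqP.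
Qed.

Lemma sum_disjoint_le1 : (forall k, F k <= 1) -> \sum_k F k <= 1.
Proof.
move=> F_le1; have [/existsP[k Fk_neq0]|] := boolP [exists k, F k != 0].
  by rewrite (sum_disjoint_support Fk_neq0).
rewrite negb_exists => /forallP F0; rewrite big1 ?ler01 // => k _.
exact/eqP/negPn/F0.
Qed.

End DisjointSupport.

Lemma ler_sum_eq (R : numDomainType) (I : finType) (P : pred I) (F G : I -> R) :
  (forall i, P i -> F i <= G i) -> \sum_(i | P i) F i = \sum_(i | P i) G i ->
  forall i, P i -> F i = G i.
Proof.
move=> FG sumFG i Pi; have [_] := leif_sum (fun i Pi => leif_eq (FG i Pi)).
by rewrite sumFG eqxx => /esym/forall_inP/(_ i Pi)/eqP.
Qed.

Section InnerProduct.
Variable R : realType.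
Local Notation C := (R[i]).

Definition orthonormal (I : finType) m (f : I -> 'cV[C]_m) : Prop :=
  forall a b, dotv (f a) (f b) = (a == b)%:R.

Lemma dotvZl m (u v : 'cV[C]_m) a : dotv (a *: u) v = a^* * dotv u v.
Proof. by rewrite mulr_sumr; apply: eq_bigr => k _; rewrite mxE rmorphM mulrA. Qed.

Lemma dotvZr m (u v : 'cV[C]_m) a : dotv u (a *: v) = a * dotv u v.
Proof. by rewrite mulr_sumr; apply: eq_bigr => k _; rewrite mxE mulrCA. Qed.

Lemma dotv_sumr m (I : finType) (u : 'cV[C]_m) (f : I -> 'cV[C]_m) :
  dotv u (\sum_a f a) = \sum_a dotv u (f a).
Proof.
by rewrite /dotv exchange_big; apply: eq_bigr => k _; rewrite summxE mulr_sumr.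
Qed.

Lemma dotvC m (u v : 'cV[C]_m) : dotv v u = (dotv u v)^*.
Proof.
by rewrite rmorph_sum; apply: eq_bigr => k _; rewrite rmorphM /= conjCK mulrC.
Qed.

Lemma dotv_mx m (u v : 'cV[C]_m) : dotv u v = ((map_mx conjc u)^T *m v) 0 0.
Proof. by rewrite mxE; apply: eq_bigr => k _; rewrite !mxE. Qed.

Lemma dotv_unitary m (U : 'M[C]_m) (u v : 'cV[C]_m) :
  unitary U -> dotv (U *m u) (U *m v) = dotv u v.
Proof.
move=> /mulmx1C UU1; rewrite !dotv_mx (map_mxM Num.conj_op) trmx_mul.
by rewrite -mulmxA (mulmxA _ U) UU1 mul1mx.
Qed.

Lemma dotv_phase_unitary m (U : 'M[C]_m) (u v : 'cV[C]_m) a b :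
  unitary U -> dotv (a *: (U *m u)) (b *: (U *m v)) = a^* * b * dotv u v.
Proof. by move=> U_unitary; rewrite dotvZl dotvZr dotv_unitary // mulrA. Qed.

Lemma dotv_tens m p (a c : 'cV[C]_m) (b d : 'cV[C]_p) :
  dotv (a *t b) (c *t d) = dotv a c * dotv b d.
Proof.
rewrite /dotv mulr_sum; apply: eq_bigr => k _; rewrite !mxE.
by case: (mxtens_unindex _) => x y; rewrite !ord1 /= rmorphM mulrACA.
Qed.

Lemma orthonormal_rescale (I : finType) m (f g : I -> 'cV[C]_m) (c : I -> C) :
  (forall a b, dotv (g a) (g b) = (c a)^* * c b * dotv (f a) (f b)) ->
  (forall a, `|c a| = 1) -> orthonormal f -> orthonormal g.
Proof.
move=> dot_g c_norm1 f_on a b; rewrite dot_g f_on.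
by case: eqP => [->|_]; rewrite ?mulr0 // mulr1 -normCKC c_norm1 expr1n.
Qed.

Lemma orthonormal_onb (I : finType) m (f : I -> 'cV[C]_m) :
  orthonormal f -> #|I| = m -> is_onb f.
Proof.
move=> f_on cardI; split=> // w; subst m.
pose A : 'M[C]_#|I| := \matrix_(p, q) f (enum_val q) p 0.
pose B := (map_mx conjc A)^T.
have BA : B *m A = 1%:M.
  apply/matrixP => q q'; rewrite !mxE; under eq_bigr do rewrite !mxE.
  by rewrite -[LHS]/(dotv _ _) f_on (inj_eq enum_val_inj).
exists (fun a => (B *m w) (enum_rank a) 0).
rewrite -{1}[w]mul1mx -(mulmx1C BA) -mulmxA.
apply/matrixP => p r; rewrite !mxE summxE.
rewrite [RHS](reindex _ (onW_bij _ (@enum_val_bij I))) /=.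
by apply: eq_bigr => q _; rewrite !mxE enum_valK ord1 mulrC.
Qed.

Section OrthonormalBasis.
Variables (I : finType) (m : nat) (f : I -> 'cV[C]_m).
Hypothesis f_onb : is_onb f.

Lemma onb_expansion w : w = \sum_a dotv (f a) w *: f a.
Proof.
have [c ->] := f_onb.2 w; apply: eq_bigr => b _; congr (_ *: _).
rewrite dotv_sumr (bigD1 b) //= big1 ?addr0; first by rewrite dotvZr f_onb.1 eqxx mulr1.
by move=> a /negbTE ab; rewrite dotvZr f_onb.1 eq_sym ab mulr0.
Qed.

Lemma onb_parseval w : \sum_a `|dotv (f a) w| ^+ 2 = dotv w w.
Proof.
rewrite {3}(onb_expansion w) dotv_sumr; apply: eq_bigr => a _.
by rewrite dotvZr (dotvC (f a) w) normCK.
Qed.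

Lemma onb_coord_norm1 w a :
  dotv w w = 1 -> `|dotv (f a) w| ^+ 2 = 1 -> w = dotv (f a) w *: f a.
Proof.
move=> w_norm1 wa_norm1; have := onb_parseval w.
rewrite w_norm1 (bigD1 a) //= wa_norm1 => /(canRL (addKr 1)); rewrite addNr => rest0.
rewrite {1}(onb_expansion w) (bigD1 a) //= big1 ?addr0 // => b ba.
have /eqP := psumr_eq0P (fun b _ => exprn_ge0 2 (normr_ge0 (dotv (f b) w))) rest0 ba.
by rewrite expf_eq0 /= normr_eq0 => /eqP ->; rewrite scale0r.
Qed.

Lemma onb_coord_eq1 w : dotv w w = 1 ->
  (forall a, `|dotv (f a) w| ^+ 2 = 0 \/ `|dotv (f a) w| ^+ 2 = 1) ->
  exists a, `|dotv (f a) w| ^+ 2 = 1.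
Proof.
move=> w_norm1 coord01.
have [a /eqP|coord_neq1] := pickP (fun a => `|dotv (f a) w| ^+ 2 == 1).
  by exists a.
have := onb_parseval w; rewrite w_norm1 big1 => [/eqP|a _].
  by rewrite eq_sym oner_eq0.
by case: (coord01 a) => // coord_eq1; have := coord_neq1 a; rewrite coord_eq1 eqxx.
Qed.

End OrthonormalBasis.

Definition coord_mx n (f : 'I_n -> 'cV[C]_n) : 'M[C]_n := \matrix_(l, p) (f l p 0)^*.

Lemma coord_mx_unitary n (f : 'I_n -> 'cV[C]_n) : orthonormal f -> unitary (coord_mx f).
Proof.
move=> f_on; apply/matrixP => q q'; rewrite !mxE -f_on.
by apply: eq_bigr => k _; rewrite !mxE conjcK.
Qed.

Lemma coord_mx_basis n (f : 'I_n -> 'cV[C]_n) l :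
  orthonormal f -> coord_mx f *m f l = ket R l.
Proof.
move=> f_on; apply/matrixP => q r; rewrite ord1 !mxE eqxx andbT -f_on.
by apply: eq_bigr => k _; rewrite mxE.
Qed.

End InnerProduct.

Section MOQLS.
Variables (R : realType) (n t : nat) (Psi : 'I_t -> 'I_n -> 'I_n -> 'cV[R[i]]_n).
Hypothesis Psi_MOQLS : MOQLS Psi.

Lemma MOQLS_row_onb k i : is_onb (fun j => Psi k i j).
Proof. exact: (Psi_MOQLS.1 k).1 i. Qed.

Lemma MOQLS_col_onb k j : is_onb (fun i => Psi k i j).
Proof. exact: (Psi_MOQLS.1 k).2 j. Qed.

Lemma MOQLS_phase_unitary (U : 'I_t -> 'M[R[i]]_n) (c : 'I_t -> 'I_n -> 'I_n -> R[i]) :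
  (forall k, unitary (U k)) -> (forall k i j, `|c k i j| = 1) ->
  MOQLS (fun k i j => c k i j *: (U k *m Psi k i j)).
Proof.
move=> U_unitary c_norm1; split=> [k|k l kl].
  split=> [i|j]; apply: orthonormal_onb (card_ord n).
    apply: (orthonormal_rescale (c := c k i)) (MOQLS_row_onb k i).1 => // a b.
    exact: dotv_phase_unitary.
  apply: (orthonormal_rescale (c := c k ^~ j)) (MOQLS_col_onb k j).1 => // a b.
  exact: dotv_phase_unitary.
apply: orthonormal_onb; last by rewrite card_prod card_ord.
apply: (orthonormal_rescale (c := fun x => c k x.1 x.2 * c l x.1 x.2))
  (Psi_MOQLS.2 k l kl).1 => [x y|x]; last by rewrite normrM !c_norm1 mulr1.
rewrite !dotv_tens !dotv_phase_unitary // rmorphM /=.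
by rewrite mulrACA; congr (_ * _); rewrite mulrACA.
Qed.

Lemma MOQLS_dotv_entry k i j : dotv (Psi k i j) (Psi k i j) = 1.
Proof. by rewrite (MOQLS_row_onb k i).1 eqxx. Qed.

Lemma MOQLS_dotv_row k i j j' : j != j' -> dotv (Psi k i j) (Psi k i j') = 0.
Proof. by move=> /negbTE jj'; rewrite (MOQLS_row_onb k i).1 jj'. Qed.

Lemma MOQLS_dotv_col k i i' j : i != i' -> dotv (Psi k i j) (Psi k i' j) = 0.
Proof. by move=> /negbTE ii'; rewrite (MOQLS_col_onb k j).1 ii'. Qed.

Lemma MOQLS_dotv_orth k l (x y : 'I_n * 'I_n) : k != l -> x != y ->
  dotv (Psi k x.1 x.2) (Psi k y.1 y.2) * dotv (Psi l x.1 x.2) (Psi l y.1 y.2) = 0.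
Proof. by move=> kl /negbTE xy; rewrite -dotv_tens (Psi_MOQLS.2 k l kl).1 xy. Qed.

Definition overlap k i0 j0 i j : R[i] := `|dotv (Psi k i j) (Psi k i0 j0)| ^+ 2.

Lemma overlap_row_sum k i0 j0 i : \sum_j overlap k i0 j0 i j = 1.
Proof. by rewrite onb_parseval ?MOQLS_dotv_entry //; exact: MOQLS_row_onb. Qed.

Lemma overlap_le1 k i0 j0 i j : overlap k i0 j0 i j <= 1.
Proof.
rewrite -(overlap_row_sum k i0 j0 i) (bigD1 j) //= lerDl.
by apply: sumr_ge0 => j' _; exact: exprn_ge0.
Qed.

Lemma overlap_disjoint i0 j0 i j : (i, j) != (i0, j0) ->
  forall k l, k != l -> overlap k i0 j0 i j * overlap l i0 j0 i j = 0.
Proof.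
by move=> ij k l kl; rewrite -exprMn -normrM (MOQLS_dotv_orth kl ij) normr0 expr0n.
Qed.

Lemma sum_overlap_le1 i0 j0 i j :
  (i, j) != (i0, j0) -> \sum_k overlap k i0 j0 i j <= 1.
Proof.
by move=> ij; apply: sum_disjoint_le1 (overlap_disjoint ij) _ => k; exact: overlap_le1.
Qed.

Lemma overlap_offblock_sum k i0 j0 :
  \sum_(i | i != i0) \sum_(j | j != j0) overlap k i0 j0 i j = n.-1%:R.
Proof.
transitivity (\sum_(i | i != i0) (1 : R[i])); last by rewrite sumr_const cardC1 card_ord.
apply: eq_bigr => i i_neq.
rewrite -(overlap_row_sum k i0 j0 i) [RHS](bigD1 j0) //=.
by rewrite /overlap MOQLS_dotv_col // normr0 expr0n add0r.
Qed.

Lemma overlap_offblock_total i0 j0 :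
  \sum_(i | i != i0) \sum_(j | j != j0) \sum_k overlap k i0 j0 i j = (n.-1 * t)%:R.
Proof.
under eq_bigr do rewrite exchange_big /=; rewrite exchange_big /=.
under eq_bigr do rewrite overlap_offblock_sum.
by rewrite sumr_const card_ord natrM mulr_natr.
Qed.

Lemma offblock_card (i0 j0 : 'I_n) :
  \sum_(i | i != i0) \sum_(j | j != j0) (1 : R[i]) = (n.-1 * n.-1)%:R.
Proof.
rewrite (eq_bigr (fun=> n.-1%:R)) => [|i _]; last by rewrite sumr_const cardC1 card_ord.
by rewrite sumr_const cardC1 card_ord natrM mulr_natr.
Qed.

Lemma MOQLS_card_le : (1 < n)%N -> (t <= n.-1)%N.
Proof.
move=> n_gt1; pose i0 : 'I_n := Ordinal (ltnW n_gt1).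
have : (n.-1 * t)%:R <= (n.-1 * n.-1)%:R :> R[i].
  rewrite -(overlap_offblock_total i0 i0) -(offblock_card i0 i0).
  apply: ler_sum => i i_neq; apply: ler_sum => j _; apply: sum_overlap_le1.
  by rewrite xpair_eqE negb_and i_neq.
by rewrite ler_nat leq_pmul2l // -ltnS prednK // ltnW.
Qed.

Lemma overlap_offblock_eq1 i0 j0 i j : t = n.-1 -> i != i0 -> j != j0 ->
  \sum_k overlap k i0 j0 i j = 1.
Proof.
move=> t_max i_neq j_neq.
have cell_le i' j' : i' != i0 -> \sum_k overlap k i0 j0 i' j' <= 1.
  by move=> i'_neq; apply: sum_overlap_le1; rewrite xpair_eqE negb_and i'_neq.
have row_eq : forall i', i' != i0 ->
    \sum_(j' | j' != j0) \sum_k overlap k i0 j0 i' j' = \sum_(j' | j' != j0) 1.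
  apply: ler_sum_eq; first by move=> i' i'_neq; apply: ler_sum => j' _; exact: cell_le.
  by rewrite overlap_offblock_total offblock_card t_max.
exact: ler_sum_eq (fun j' _ => cell_le i j' i_neq) (row_eq i i_neq) j j_neq.
Qed.

Lemma overlap_eq0_or1 k i0 j0 i j : t = n.-1 ->
  overlap k i0 j0 i j = 0 \/ overlap k i0 j0 i j = 1.
Proof.
move=> t_max; have [-> | i_neq] := eqVneq i i0.
  have [-> | j_neq] := eqVneq j j0.
    by right; rewrite /overlap MOQLS_dotv_entry normr1 expr1n.
  by left; rewrite /overlap MOQLS_dotv_row // normr0 expr0n.
have [-> | j_neq] := eqVneq j j0.
  by left; rewrite /overlap MOQLS_dotv_col // normr0 expr0n.
have [-> | overlap_neq0] := eqVneq (overlap k i0 j0 i j) 0; [by left | right].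
have ij : (i, j) != (i0, j0) by rewrite xpair_eqE negb_and i_neq.
by rewrite -(overlap_offblock_eq1 t_max i_neq j_neq)
  (sum_disjoint_support (overlap_disjoint ij) overlap_neq0).
Qed.

Section Classical.
Variable r0 : 'I_n.
Hypothesis t_max : t = n.-1.

Lemma entry_coord_exists k i j :
  exists l, `|dotv (Psi k r0 l) (Psi k i j)| ^+ 2 == 1.
Proof.
have [l /eqP] := onb_coord_eq1 (MOQLS_row_onb k r0) (MOQLS_dotv_entry k i j)
  (fun l => overlap_eq0_or1 k i j r0 l t_max).
by exists l.
Qed.

Definition entry_index k i j : 'I_n := xchoose (entry_coord_exists k i j).

Definition entry_phase k i j : R[i] :=
  (dotv (Psi k r0 (entry_index k i j)) (Psi k i j))^*.

Lemma entry_phase_norm1 k i j : `|entry_phase k i j| = 1.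
Proof.
rewrite norm_conjC; apply/eqP; rewrite -sqrp_eq1 ?normr_ge0 //.
exact: (xchooseP (entry_coord_exists k i j)).
Qed.

Definition classical_form k i j : 'cV[R[i]]_n :=
  entry_phase k i j *: (coord_mx (fun l => Psi k r0 l) *m Psi k i j).

Lemma classical_formE k i j : classical_form k i j = ket R (entry_index k i j).
Proof.
have /eqP coord_norm1 := xchooseP (entry_coord_exists k i j).
have Psi_eq := onb_coord_norm1 (MOQLS_row_onb k r0) (MOQLS_dotv_entry k i j) coord_norm1.
rewrite /classical_form /entry_phase [X in _ *m X]Psi_eq -scalemxAr.
rewrite coord_mx_basis; last exact: (MOQLS_row_onb k r0).1.
by rewrite scalerA -normCKC coord_norm1 scale1r.
Qed.

Lemma coord_mx_row_unitary k : unitary (coord_mx (fun l => Psi k r0 l)).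
Proof. exact/coord_mx_unitary/(MOQLS_row_onb k r0).1. Qed.

Lemma MOQLS_max_classical : classical_MOQLS Psi.
Proof.
exists classical_form; split.
  exact: MOQLS_phase_unitary coord_mx_row_unitary entry_phase_norm1.
split; last by move=> k i j; exists (entry_index k i j); exact: classical_formE.
apply: isotopic_step (iso_phase _ entry_phase_norm1).
exact: isotopic_step (isotopic_refl Psi) (iso_unitary Psi coord_mx_row_unitary).
Qed.

End Classical.
End MOQLS.

Unset Implicit Arguments.

Theorem mainTheorem2 (R : realType) (n t : nat)
    (Psi : 'I_t -> 'I_n -> 'I_n -> 'cV[R[i]]_n) :
  (2 <= n)%N -> MOQLS Psi ->
  (t <= n.-1)%N /\ (t = n.-1 -> classical_MOQLS Psi).
Proof.
move=> n_ge2 Psi_MOQLS; split; first exact: (MOQLS_card_le Psi_MOQLS n_ge2).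
exact: MOQLS_max_classical Psi_MOQLS (Ordinal (ltnW n_ge2)).
Qed.
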